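(* Let $\mathfrak{g}$ be a finite-dimensional complex Lie algebra and let $x\cdot y=[\phi(x),y]$ be a nil-inner CPA-structure on $\mathfrak{g}$, where $\phi:\mathfrak{g}\to\mathfrak{g}$ is a nilpotent Lie algebra homomorphism. Then $\phi(\mathfrak{g})\subseteq\mathrm{nil}(\mathfrak{g})$ and $\mathrm{fix}(\mathfrak{g})\subseteq\ker(\phi)$.
   Context: A CPA-structure on $\mathfrak{g}$ is a bilinear product $x\cdot y$ satisfying, for all $x,y,z$: $x\cdot y=y\cdot x$; $[x,y]\cdot z=x\cdot(y\cdot z)-y\cdot(x\cdot z)$; $x\cdot[y,z]=[x\cdot y,z]+[y,x\cdot z]$. $\mathrm{nil}(\mathfrak{g})$ is the nilradical of $\mathfrak{g}$. $\mathrm{fix}(\mathfrak{g})$ is the Lie ideal of $\mathfrak{g}$ generated by $\{x\in\mathfrak{g}\mid\mathrm{ad}(y)x=x\text{ for some }y\in\mathfrak{g}\}$. *)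

From HB Require Import structures.
From mathcomp Require Import all_boot all_algebra reals.
From mathcomp.real_closed Require Import complex.
Set Implicit Arguments. Unset Strict Implicit. Unset Printing Implicit Defensive.
Import GRing.Theory.
Local Open Scope ring_scope.

Section Lie.
Variables (K : fieldType) (V : vectType K).
Implicit Types (br : V -> V -> V).

Definition bilinear_map br : Prop :=
  (forall x (a : K) y z, br x (a *: y + z) = a *: br x y + br x z) /\
  (forall y (a : K) x z, br (a *: x + z) y = a *: br x y + br z y).

Definition is_lie_bracket br : Prop :=
  [/\ bilinear_map br,
      (forall x, br x x = 0) &
      (forall x y z, br x (br y z) + br y (br z x) + br z (br x y) = 0)].

Definition is_CPA br (prod : V -> V -> V) : Prop :=
  [/\ bilinear_map prod,
      (forall x y, prod x y = prod y x),
      (forall x y z, prod (br x y) z = prod x (prod y z) - prod y (prod x z)) &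
      (forall x y z, prod x (br y z) = br (prod x y) z + br y (prod x z))].

Definition lie_hom br (phi : 'End(V)) : Prop :=
  forall x y, phi (br x y) = br (phi x) (phi y).

Definition nilpotent_map (phi : 'End(V)) : Prop :=
  exists n, forall x, iter n phi x = 0.

Definition lie_ideal br (I : {vspace V}) : Prop :=
  forall x y, y \in I -> br x y \in I.

(* [I, J] : the subspace spanned by the brackets [u, v], u in I, v in J
   (by bilinearity, spanned by the brackets of basis vectors). *)
Definition bracket_space br (I J : {vspace V}) : {vspace V} :=
  <<[seq br u v | u <- vbasis I, v <- vbasis J]>>%VS.

Fixpoint lcs br (I : {vspace V}) (n : nat) : {vspace V} :=
  match n with
  | 0 => I
  | n'.+1 => bracket_space br I (lcs br I n')
  end.

Definition nilpotent_ideal br (I : {vspace V}) : Prop :=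
  lie_ideal br I /\ exists n, lcs br I n = 0%VS.

Definition is_nilradical br (N : {vspace V}) : Prop :=
  nilpotent_ideal br N /\
  forall I, nilpotent_ideal br I -> (I <= N)%VS.

(* fix(g): the Lie ideal generated by {x | ad(y) x = x for some y},
   i.e. the intersection of all ideals containing this set. *)
Definition fix_gen br (x : V) : Prop := exists y, br y x = x.

Definition in_fix br (x : V) : Prop :=
  forall I : {vspace V}, lie_ideal br I ->
    (forall z, fix_gen br z -> z \in I) -> x \in I.

End Lie.

(** The CPA axiom of commutativity says [[phi u, v] = [phi v, u] = -[u, phi v]],
    so [phi] is anti-self-adjoint for the bracket, and iterating gives
    [[phi^k u, v] = (-1)^k [u, phi^k v]].

    If [[y, z] = z] then [phi^k z = +-[y, phi^(2k) z]], so the powers of [phi]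
    kill [z] from the top down: [phi z = 0].  Since [ker phi] is an ideal, it
    contains [fix(g)].

    For the nilradical, let [J] be the set of [u] whose adjoint action lowers
    the kernel filtration: [phi^c v = 0] implies [phi^(c-1) [u, v] = 0].  It is
    an ideal containing [phi(g)] (by the sign identity), and the [k]-th term of
    its lower central series lies in [ker phi^(n-k)], so [J] is a nilpotent
    ideal and hence lies in the nilradical. *)
From HB Require Import structures.
From mathcomp Require Import all_boot all_algebra reals.
From mathcomp.real_closed Require Import complex.
From Stdlib Require Import Classical Lia.
From mathcomp Require Import zify.
Set Implicit Arguments. Unset Strict Implicit. Unset Printing Implicit Defensive.
Local Open Scope ring_scope.
Import GRing.Theory.

Lemma vspace_of_linear_pred (K : fieldType) (V : vectType K) (P : V -> Prop) :
  P 0 -> (forall (a : K) x y, P x -> P y -> P (a *: x + y)) ->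
  exists W : {vspace V}, forall v, v \in W <-> P v.
Proof.
move=> P0 PL.
suff ext (W : {vspace V}) : (forall w, w \in W -> P w) ->
    exists W' : {vspace V}, forall v, v \in W' <-> P v.
  by apply: (ext 0%VS) => w; rewrite memv0 => /eqP ->.
have [m] := ubnP (\dim (fullv : {vspace V}) - \dim W)%N.
elim: m W => // m IH W ltm PW.
case: (classic (forall v, P v -> v \in W)) => [WP|notWP].
  by exists W => v; split=> [/PW|/WP].
have [v /(imply_to_and (P v)) [Pv vW]] := not_all_ex_not _ _ notWP.
have sWWv : (W <= W + <[v]>)%VS by exact: addvSl.
have ltW : (\dim W < \dim (W + <[v]>))%N.
  rewrite (ltn_leqif (dimv_leqif_eq sWWv)); apply/eqP => eqW; apply: vW; rewrite eqW.
  by apply/memv_addP; exists 0; rewrite ?mem0v //; exists v; rewrite ?memv_line ?add0r.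
have leWv : (\dim (W + <[v]>) <= \dim (fullv : {vspace V}))%N.
  by apply: dimvS; exact: subvf.
apply: (IH (W + <[v]>)%VS); first by lia.
move=> w /memv_addP [u uW [z /vlineP [k ->] ->]].
by rewrite addrC; apply: PL => //; apply: PW.
Qed.

Section IteratedEndomorphism.

Variables (K : fieldType) (V : vectType K) (f : 'End(V)).

Lemma iter_linear0 k : iter k f 0 = 0.
Proof. by elim: k => //= k ->; rewrite linear0. Qed.

Lemma iter_linearP k a x y : iter k f (a *: x + y) = a *: iter k f x + iter k f y.
Proof. by elim: k => //= k ->; rewrite linearP. Qed.

Lemma iter_linearB k x y : iter k f (x - y) = iter k f x - iter k f y.
Proof. by elim: k => //= k ->; rewrite linearB. Qed.

Lemma nilpotent_iter_ge n k x :
  (forall y, iter n f y = 0) -> (n <= k)%N -> iter k f x = 0.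
Proof. by move=> nil /subnK <-; rewrite iterD nil iter_linear0. Qed.

Lemma kernel_iter_vspace k :
  exists W : {vspace V}, forall v, v \in W <-> iter k f v = 0.
Proof.
apply: vspace_of_linear_pred; first exact: iter_linear0.
by move=> a x y hx hy; rewrite iter_linearP hx hy scaler0 addr0.
Qed.

End IteratedEndomorphism.

Section LieAlgebra.

Variables (K : fieldType) (V : vectType K) (br : V -> V -> V).
Hypothesis lieV : is_lie_bracket br.

Lemma lie_br0r x : br x 0 = 0.
Proof.
case: lieV => [[brL _] _ _]; have := brL x 1 0 0.
by rewrite scaler0 addr0 scale1r -{1}[br x 0]addr0 => /addrI <-.
Qed.

Lemma lie_br0l x : br 0 x = 0.
Proof.
case: lieV => [[_ brR] _ _]; have := brR x 1 0 0.
by rewrite scaler0 addr0 scale1r -{1}[br 0 x]addr0 => /addrI <-.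
Qed.

Lemma lie_brDr x y z : br x (y + z) = br x y + br x z.
Proof. by case: lieV => [[brL _] _ _]; have := brL x 1 y z; rewrite !scale1r. Qed.

Lemma lie_brDl x y z : br (y + z) x = br y x + br z x.
Proof. by case: lieV => [[_ brR] _ _]; have := brR x 1 y z; rewrite !scale1r. Qed.

Lemma lie_brZr x a y : br x (a *: y) = a *: br x y.
Proof.
by case: lieV => [[brL _] _ _]; have := brL x a y 0; rewrite !addr0 lie_br0r addr0.
Qed.

Lemma lie_brZl x a y : br (a *: y) x = a *: br y x.
Proof.
by case: lieV => [[_ brR] _ _]; have := brR x a y 0; rewrite !addr0 lie_br0l addr0.
Qed.

Lemma lie_brNr x y : br x (- y) = - br x y.
Proof. by rewrite -scaleN1r lie_brZr scaleN1r. Qed.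

Lemma lie_brC x y : br y x = - br x y.
Proof.
case: lieV => [_ alt _]; have := alt (x + y).
rewrite lie_brDr !lie_brDl !alt add0r addr0 => /eqP.
by rewrite addr_eq0 => /eqP.
Qed.

Lemma lie_br_leibniz y u v : br (br y u) v = br y (br u v) - br u (br y v).
Proof.
case: lieV => [_ _ jacobi]; have := jacobi y u v.
rewrite (lie_brC (br y u) v) (lie_brC y v) lie_brNr => h.
by rewrite -[LHS]add0r -h subrK.
Qed.

Lemma lie_hom_lker_ideal (phi : 'End(V)) : lie_hom br phi -> lie_ideal br (lker phi).
Proof. by move=> hom x y; rewrite !memv_ker hom => /eqP ->; rewrite lie_br0r. Qed.

Lemma nil_inner_CPA_skew (phi : 'End(V)) :
  is_CPA br (fun x y => br (phi x) y) -> forall u v, br (phi u) v = - br u (phi v).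
Proof. by case=> _ comm _ _ u v; rewrite comm lie_brC. Qed.

Section SkewHomomorphism.

Variable phi : 'End(V).
Hypothesis hom : lie_hom br phi.
Hypothesis skew : forall u v, br (phi u) v = - br u (phi v).

Lemma iter_lie_hom k x y : iter k phi (br x y) = br (iter k phi x) (iter k phi y).
Proof. by elim: k => //= k ->; rewrite hom. Qed.

Lemma iter_skew k x y : br (iter k phi x) y = (-1) ^+ k *: br x (iter k phi y).
Proof.
elim: k x y => [|k IH] x y; first by rewrite expr0 scale1r.
by rewrite iterS skew IH -iterSr exprS mulN1r scaleNr.
Qed.

Lemma iter_eigen_double y z : br y z = z ->
  forall k, exists s : K, iter k phi z = s *: br y (iter k.*2 phi z).
Proof.
move=> yz; elim=> [|k [s hs]]; first by exists 1; rewrite scale1r yz.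
by exists (- s); rewrite iterS hs linearZ /= hom skew scaleNr scalerN.
Qed.

Lemma ad_fixed_in_ker n y z :
  (forall x, iter n phi x = 0) -> br y z = z -> phi z = 0.
Proof.
move=> nil yz; suff top d k : (0 < k)%N -> (n <= k + d)%N -> iter k phi z = 0.
  exact: (top n 1%N).
elim: d k => [|d IH] k k_gt0 hk; first by apply: nilpotent_iter_ge nil _; lia.
have [s ->] := iter_eigen_double yz k.
by rewrite (IH k.*2) ?lie_br0r ?scaler0 //; lia.
Qed.

Definition ad_lowers_kernels u :=
  forall c v, iter c phi v = 0 -> iter c.-1 phi (br u v) = 0.

Lemma ad_lowers_kernels_vspace :
  exists J : {vspace V}, forall u, u \in J <-> ad_lowers_kernels u.
Proof.
apply: vspace_of_linear_pred => [c v _|a x y hx hy c v hv].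
  by rewrite lie_br0l iter_linear0.
by rewrite lie_brDl lie_brZl iter_linearP (hx c v hv) (hy c v hv) scaler0 addr0.
Qed.

Lemma ad_lowers_kernels_brl x y :
  ad_lowers_kernels y -> ad_lowers_kernels (br x y).
Proof.
move=> hy c v hv; rewrite lie_br_leibniz iter_linearB iter_lie_hom (hy c v hv).
by rewrite lie_br0r (hy c (br x v)) ?subrr // iter_lie_hom hv lie_br0r.
Qed.

Lemma ad_lowers_kernels_image x : ad_lowers_kernels (phi x).
Proof.
case=> [|c] v hv; first by move: hv => /= ->; rewrite lie_br0r.
by rewrite /= iter_lie_hom -iterSr iter_skew -iterD addnC iterD hv iter_linear0
  lie_br0r scaler0.
Qed.

Lemma lcs_ad_lowers_kernels n (J : {vspace V}) :
  (forall x, iter n phi x = 0) -> (forall u, u \in J -> ad_lowers_kernels u) ->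
  forall k v, v \in lcs br J k -> iter (n - k) phi v = 0.
Proof.
move=> nil lowJ; elim=> [|k IH].
  by move=> v _; apply: nilpotent_iter_ge nil _; rewrite subn0.
have [W hW] := kernel_iter_vspace phi (n - k.+1).
suff /subvP lcsW : (lcs br J k.+1 <= W)%VS by move=> v /lcsW /hW.
apply/span_subvP => _ /allpairsP[[u w] [/= u_b w_b ->]]; apply/hW; rewrite subnS.
exact: (lowJ u (vbasis_mem u_b)) _ _ (IH w (vbasis_mem w_b)).
Qed.

End SkewHomomorphism.

End LieAlgebra.

Theorem lemma4p6 (R : realType) (V : vectType R[i]) (br : V -> V -> V)
    (phi : 'End(V)) :
  is_lie_bracket br ->
  lie_hom br phi ->
  nilpotent_map phi ->
  is_CPA br (fun x y => br (phi x) y) ->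
  (forall N : {vspace V}, is_nilradical br N -> forall x, phi x \in N) /\
  (forall x, in_fix br x -> phi x = 0).
Proof.
move=> lieV hom [n nil] /(nil_inner_CPA_skew lieV) skew; split; last first.
  move=> x fix_x; apply/eqP; rewrite -memv_ker.
  apply: fix_x; first exact: lie_hom_lker_ideal.
  by move=> z [y yz]; rewrite memv_ker (ad_fixed_in_ker lieV hom skew nil yz).
have [J hJ] := ad_lowers_kernels_vspace lieV phi.
have idealJ : lie_ideal br J.
  by move=> x y /hJ yJ; apply/hJ; exact: (ad_lowers_kernels_brl lieV hom x yJ).
have lcsJ0 : lcs br J n = 0%VS.
  apply/eqP; rewrite -subv0; apply/subvP => v.
  move=> /(lcs_ad_lowers_kernels nil (fun u => proj1 (hJ u))).
  by rewrite subnn /= => ->; rewrite mem0v.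
move=> N [_ maxN] x; apply: (subvP (maxN J _)); first by split; last exists n.
by apply/hJ; exact: (ad_lowers_kernels_image lieV hom skew x).
Qed.
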